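(* Let $n\ge 2$ and let $\epsilon_n$ be a primitive $n$-th root of unity in $\mathbb{C}$. On the vector space $\mathscr{C}_n=\mathbb{C}[z]/(z^n-1)$ define the multiplication $$p(z)\circ q(z)=p(\epsilon_n z)\,q(\epsilon_n z)\mod (z^n-1).$$ Then $(\mathscr{C}_n,\circ)$ is an $n$-dimensional commutative medial isospectral algebra over $\mathbb{C}$. Furthermore, every $p\in\mathscr{C}_n$ satisfies $p^{n+1}=\beta(p)\,p$ (principal powers with respect to $\circ$), where $$\beta(p)=p(1)\,p(\epsilon_n)\,p(\epsilon_n^2)\cdots p(\epsilon_n^{n-1}),$$ and $\beta:\mathscr{C}_n\to\mathbb{C}$ is a multiplicative homomorphism.
   Context: An algebra is medial if $(xy)(zw)=(xz)(yw)$ for all $x,y,z,w$. For an idempotent $c$, the spectrum of $c$ is the multiset of eigenvalues of $L_c:x\mapsto cx$; an algebra is isospectral if all its nonzero idempotents have the same spectrum. Principal powers: $x^1=x$, $x^{k+1}=x\circ x^k$. $p(\alpha)$ for $p\in\mathscr{C}_n$ and $\alpha^n=1$ is well defined. *)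

From HB Require Import structures.
From mathcomp Require Import all_boot all_order all_algebra all_field.
Set Implicit Arguments. Unset Strict Implicit. Unset Printing Implicit Defensive.
Import Order.TTheory GRing.Theory Num.Theory.
Local Open Scope ring_scope.

(* Model of C_n = C[z]/(z^n - 1): an element is represented by its unique
   representative of degree < n, stored as its coefficient row vector
   in 'rV[algC]_n (algC = the algebraic complex numbers, our model of C). *)
Definition Cn (n : nat) := 'rV[algC]_n.

Definition poly_of (n : nat) (p : Cn n) : {poly algC} := \sum_(i < n) p 0 i *: 'X^i.

Definition of_poly (n : nat) (r : {poly algC}) : Cn n :=
  \row_(i < n) (r %% ('X^n - 1))`_i.

Definition circ (n : nat) (eps : algC) (p q : Cn n) : Cn n :=
  of_poly n ((poly_of p \Po (eps *: 'X)) * (poly_of q \Po (eps *: 'X))).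

(* principal powers: x^1 = x, x^(k+1) = x o x^k ; ppow x k = x^(k+1) *)
Fixpoint ppow (n : nat) (eps : algC) (x : Cn n) (k : nat) : Cn n :=
  match k with
  | 0 => x
  | k'.+1 => circ eps x (ppow eps x k')
  end.

Definition pp (n : nat) (eps : algC) (x : Cn n) (m : nat) : Cn n :=
  ppow eps x m.-1.

(* p(alpha), well defined for alpha^n = 1 *)
Definition peval (n : nat) (p : Cn n) (a : algC) : algC := (poly_of p).[a].

Definition beta (n : nat) (eps : algC) (p : Cn n) : algC :=
  \prod_(i < n) peval p (eps ^+ i).

Definition Lmx (n : nat) (eps : algC) (c : Cn n) : 'M[algC]_n :=
  lin1_mx (circ eps c).

(* spectrum of c : multiplicity of each a as an eigenvalue of L_c
   (algebraic multiplicity = multiplicity as root of the char. polynomial) *)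
Definition spectrum (n : nat) (eps : algC) (c : Cn n) : algC -> nat :=
  fun a => mup a (char_poly (Lmx eps c)).

Definition commutative_alg (n : nat) (eps : algC) : Prop :=
  forall x y : Cn n, circ eps x y = circ eps y x.

Definition medial_alg (n : nat) (eps : algC) : Prop :=
  forall x y z w : Cn n,
    circ eps (circ eps x y) (circ eps z w) = circ eps (circ eps x z) (circ eps y w).

Definition isospectral_alg (n : nat) (eps : algC) : Prop :=
  forall c d : Cn n, c != 0 -> circ eps c c = c -> d != 0 -> circ eps d d = d ->
    spectrum eps c =1 spectrum eps d.

From HB Require Import structures.
From mathcomp Require Import all_boot all_order all_algebra all_field.
Import GRing.Theory Num.Theory.
Local Open Scope ring_scope.
Set Implicit Arguments. Unset Strict Implicit.

(* Evaluation at the n-th roots of unity, p |-> (p(eps^k))_k, is a linear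
   isomorphism from C_n onto C^n (its matrix is a Vandermonde matrix), and it
   turns the product o into the shifted pointwise product
   (p o q)(eps^k) = p(eps^(k+1)) q(eps^(k+1)).  Commutativity, mediality,
   p^(n+1) = beta(p) p and the multiplicativity of beta are then identities
   between products of values.  A nonzero idempotent c satisfies
   c(eps^k) = c(eps^(k+1))^2, so all its values are nonzero and beta(c) = 1;
   hence k |-> c(eps^(k+1)) is the cocycle u(eps^(k+1)) / u(eps^k) of some u
   with nonzero values, and multiplication by u conjugates L_c to L_1. *)

Lemma prod_periodic_shift1 (R : comPzSemiRingType) n (f : nat -> R) :
  (0 < n)%N -> (forall k, f (k + n)%N = f k) ->
  \prod_(i < n) f i.+1 = \prod_(i < n) f i.
Proof.
case: n => // n _ f_per.
by rewrite big_ord_recr big_ord_recl /= mulrC -(f_per 0%N) add0n.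
Qed.

Lemma prod_periodic_shift (R : comPzSemiRingType) n (f : nat -> R) j :
  (0 < n)%N -> (forall k, f (k + n)%N = f k) ->
  \prod_(i < n) f (i + j)%N = \prod_(i < n) f i.
Proof.
move=> n_gt0 f_per; elim: j => [|j IHj].
  by apply: eq_bigr => i _; rewrite addn0.
rewrite -IHj -(prod_periodic_shift1 (f := fun i => f (i + j)%N)) //.
  by apply: eq_bigr => i _; rewrite addnS.
by move=> k; rewrite addnAC f_per.
Qed.

Lemma char_poly_similar (F : fieldType) n (A B T : 'M[F]_n) :
  T \in unitmx -> A *m T = T *m B -> char_poly A = char_poly B.
Proof.
move=> T_unit ATB; pose TX := map_mx polyC T.
have TX_conj : char_poly_mx A *m TX = TX *m char_poly_mx B.
  by rewrite mulmxBl mulmxBr -!map_mxM ATB scalar_mxC.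
have detTX_neq0 : \det TX != 0.
  by rewrite det_map_mx polyC_eq0 -unitfE -unitmxE.
apply: (mulIf detTX_neq0).
by rewrite /char_poly -!det_mulmx TX_conj det_mulmx mulrC -det_mulmx.
Qed.

Lemma mul_rV_lin1_linear (R : pzRingType) m n (f : 'rV[R]_m -> 'rV[R]_n) :
  linear f -> forall u, u *m lin1_mx f = f u.
Proof.
move=> f_lin; pose g : {linear 'rV[R]_m -> 'rV[R]_n} :=
  HB.pack f (GRing.isLinear.Build _ _ _ _ f f_lin).
exact: (mul_rV_lin1 g).
Qed.

Section PolynomialModel.
Variables (n : nat) (eps : algC).

Lemma peval_sum (p : Cn n) a : peval p a = \sum_(i < n) p 0 i * a ^+ i.
Proof.
rewrite /peval /poly_of horner_sum; apply: eq_bigr => i _.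
by rewrite hornerZ hornerXn.
Qed.

Hypothesis n_gt0 : (0 < n)%N.

Lemma peval_of_poly r a : a ^+ n = 1 -> peval (of_poly n r) a = r.[a].
Proof.
move=> a_root; have m_root : root ('X^n - 1) a.
  by rewrite rootE !hornerE a_root subrr.
have size_mod : (size (r %% ('X^n - 1))%R <= n)%N.
  rewrite -ltnS -(size_XnsubC (1 : algC) n_gt0) ltn_modp.
  by rewrite -size_poly_eq0 size_XnsubC.
rewrite -(horner_mod _ m_root) (horner_coef_wide _ size_mod) peval_sum.
by apply: eq_bigr => i _; rewrite mxE.
Qed.

Lemma peval_circ (p q : Cn n) a : a ^+ n = 1 ->
  peval (circ eps p q) a = peval p (eps * a) * peval q (eps * a).
Proof.
by move=> a_root; rewrite peval_of_poly // hornerM !horner_comp !hornerE.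
Qed.

Definition cmul (u y : Cn n) : Cn n := of_poly n (poly_of u * poly_of y).

Lemma peval_cmul (u y : Cn n) a : a ^+ n = 1 ->
  peval (cmul u y) a = peval u a * peval y a.
Proof. by move=> a_root; rewrite peval_of_poly // hornerM. Qed.

End PolynomialModel.

Section FourierTransform.
Variables (n : nat) (eps : algC).
Hypothesis eps_prim : n.-primitive_root eps.

Let n_gt0 : (0 < n)%N := prim_order_gt0 eps_prim.

Definition dft (p : Cn n) (k : nat) : algC := peval p (eps ^+ k).

Definition fourier_mx : 'M[algC]_n := Vandermonde n (\row_(k < n) eps ^+ k).

Lemma eps_expr_root k : (eps ^+ k) ^+ n = 1.
Proof. by rewrite -exprM mulnC exprM (prim_expr_order eps_prim) expr1n. Qed.

Lemma dft_periodic (p : Cn n) k : dft p (k + n) = dft p k.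
Proof. by rewrite /dft exprD (prim_expr_order eps_prim) mulr1. Qed.

Lemma dftD (p q : Cn n) k : dft (p + q) k = dft p k + dft q k.
Proof.
rewrite /dft !peval_sum -big_split; apply: eq_bigr => i _.
by rewrite mxE mulrDl.
Qed.

Lemma dftZ a (p : Cn n) k : dft (a *: p) k = a * dft p k.
Proof.
rewrite /dft !peval_sum mulr_sumr; apply: eq_bigr => i _.
by rewrite mxE mulrA.
Qed.

Lemma dft0 k : dft 0 k = 0.
Proof. by rewrite -(scale0r 0) dftZ mul0r. Qed.

Lemma dft_circ (p q : Cn n) k : dft (circ eps p q) k = dft p k.+1 * dft q k.+1.
Proof. by rewrite /dft peval_circ ?eps_expr_root // -exprS. Qed.

Lemma dft_cmul (u y : Cn n) k : dft (cmul u y) k = dft u k * dft y k.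
Proof. exact: peval_cmul (eps_expr_root k). Qed.

Lemma dft_one k : dft (of_poly n 1) k = 1.
Proof. by rewrite /dft peval_of_poly ?eps_expr_root // hornerC. Qed.

Lemma dft_mx (p : Cn n) (k : 'I_n) : (p *m fourier_mx) 0 k = dft p k.
Proof.
rewrite /dft peval_sum mxE; apply: eq_bigr => i _.
by rewrite !mxE -!exprM mulnC.
Qed.

Lemma fourier_mx_unit : fourier_mx \in unitmx.
Proof.
rewrite unitmxE unitfE det_Vandermonde; apply/prodf_neq0 => i _.
apply/prodf_neq0 => j lt_ij.
rewrite !mxE subr_eq0 (eq_prim_root_expr eps_prim) !modn_small //.
by rewrite neq_ltn lt_ij orbT.
Qed.

Lemma dft_inj (p q : Cn n) :
  (forall k, (k < n)%N -> dft p k = dft q k) -> p = q.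
Proof.
move=> eq_pq; apply: (can_inj (mulmxK fourier_mx_unit)).
by apply/rowP => k; rewrite !dft_mx eq_pq.
Qed.

Lemma dft_interpolate (w : nat -> algC) :
  exists u : Cn n, forall k, (k < n)%N -> dft u k = w k.
Proof.
exists ((\row_(k < n) w k) *m invmx fourier_mx) => k lt_kn.
by rewrite -(dft_mx _ (Ordinal lt_kn)) mulmxKV ?fourier_mx_unit // mxE.
Qed.

Lemma beta_dft (p : Cn n) : beta eps p = \prod_(i < n) dft p i.
Proof. by []. Qed.

Lemma prod_dft_shift (p : Cn n) j :
  \prod_(i < n) dft p (i + j) = \prod_(i < n) dft p i.
Proof. exact: prod_periodic_shift (dft_periodic p). Qed.

Lemma circ_commutative : commutative_alg n eps.
Proof. by move=> p q; apply: dft_inj => k _; rewrite !dft_circ mulrC. Qed.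

Lemma circ_medial : medial_alg n eps.
Proof.
by move=> x y z w; apply: dft_inj => k _; rewrite !dft_circ mulrACA.
Qed.

Lemma circ_linear (c : Cn n) : linear (circ eps c).
Proof.
move=> a x y; apply: dft_inj => k _.
by rewrite dftD dftZ !dft_circ dftD dftZ mulrDr mulrCA.
Qed.

Lemma mul_rV_Lmx (c x : Cn n) : x *m Lmx eps c = circ eps c x.
Proof. exact: mul_rV_lin1_linear (circ_linear c) x. Qed.

Lemma dft_ppow (p : Cn n) k j :
  dft (ppow eps p k) j = (\prod_(i < k) dft p (j + i).+1) * dft p (j + k).
Proof.
elim: k j => [|k IHk] j /=; first by rewrite big_ord0 mul1r addn0.
rewrite dft_circ IHk big_ord_recl addn0 mulrA addSn addnS.
by congr (_ * _ * _); apply: eq_bigr => i _; rewrite addSn addnS.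
Qed.

Lemma pp_beta (p : Cn n) : pp eps p n.+1 = beta eps p *: p.
Proof.
apply: dft_inj => k _; rewrite dft_ppow dftZ dft_periodic beta_dft.
by rewrite -(prod_dft_shift p k.+1); under eq_bigr do rewrite addnC -addnS.
Qed.

Lemma beta_circ (p q : Cn n) :
  beta eps (circ eps p q) = beta eps p * beta eps q.
Proof.
rewrite !beta_dft -(prod_dft_shift p 1) -(prod_dft_shift q 1) -big_split.
by apply: eq_bigr => i _; rewrite dft_circ !addn1.
Qed.

Lemma cmul_linear (u : Cn n) : linear (cmul u).
Proof.
move=> a x y; apply: dft_inj => k _.
by rewrite dftD dftZ !dft_cmul dftD dftZ mulrDr mulrCA.
Qed.

Lemma lin1_cmul_unit (u : Cn n) :
  (forall k, (k < n)%N -> dft u k != 0) -> lin1_mx (cmul u) \in unitmx.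
Proof.
move=> u_neq0; rewrite -row_free_unit; apply: inj_row_free => v.
rewrite (mul_rV_lin1_linear (cmul_linear u)).
move=> uv0; apply: dft_inj => k lt_kn; apply: (mulfI (u_neq0 k lt_kn)).
by rewrite -dft_cmul uv0 dft0 mulr0.
Qed.

Section Idempotent.
Variable c : Cn n.
Hypotheses (c_neq0 : c != 0) (c_idem : circ eps c c = c).

Lemma dft_idem_expn k j : dft c k = dft c (k + j) ^+ (2 ^ j).
Proof.
elim: j => [|j IHj]; first by rewrite addn0 expr1.
by rewrite IHj -{1}c_idem dft_circ -expr2 -exprM expnS mulnC addnS.
Qed.

Lemma dft_idem_neq0 k : dft c k != 0.
Proof.
apply: contra_neq c_neq0 => ck0; apply: dft_inj => i lt_in.
rewrite dft0 (dft_idem_expn i (k + n - i)) subnKC ?dft_periodic ?ck0.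
  by rewrite expr0n expn_eq0.
by rewrite (leq_trans (ltnW lt_in)) ?leq_addl.
Qed.

Lemma beta_idem : beta eps c = 1.
Proof.
have beta_sq : beta eps c = beta eps c * beta eps c.
  by rewrite -{1}c_idem beta_circ.
have beta_neq0 : beta eps c != 0.
  by apply/prodf_neq0 => i _; apply: dft_idem_neq0.
by apply: (mulIf beta_neq0); rewrite mul1r -beta_sq.
Qed.

Lemma idem_cocycle : exists u : Cn n,
  (forall k, (k < n)%N -> dft u k != 0) /\
  (forall k, (k < n)%N -> dft u k.+1 = dft u k * dft c k.+1).
Proof.
pose w k := \prod_(i < k) dft c i.+1.
have [u u_w] := dft_interpolate w.
have u_wS k : (k < n)%N -> dft u k.+1 = w k.+1.
  rewrite leq_eqVlt => /orP[/eqP kS_n | ]; last exact: u_w.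
  rewrite kS_n -[n]add0n dft_periodic u_w // /w big_ord0.
  under eq_bigr do rewrite -addn1.
  by rewrite prod_dft_shift -beta_dft beta_idem.
exists u; split=> k lt_kn.
  by rewrite u_w //; apply/prodf_neq0 => i _; apply: dft_idem_neq0.
by rewrite u_wS // u_w // /w big_ord_recr.
Qed.

Lemma char_poly_Lmx_idem :
  char_poly (Lmx eps c) = char_poly (Lmx eps (of_poly n 1)).
Proof.
have [u [u_neq0 u_cocycle]] := idem_cocycle.
apply: (char_poly_similar (lin1_cmul_unit u_neq0)).
apply/row_matrixP => i; rewrite !rowE !mulmxA !mul_rV_Lmx.
rewrite !(mul_rV_lin1_linear (cmul_linear u)); apply: dft_inj => k lt_kn.
by rewrite dft_cmul !dft_circ dft_cmul dft_one mul1r u_cocycle // mulrA.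
Qed.

End Idempotent.

Lemma circ_isospectral : isospectral_alg n eps.
Proof.
move=> c d c_neq0 c_idem d_neq0 d_idem a.
by rewrite /spectrum !char_poly_Lmx_idem.
Qed.

End FourierTransform.

Theorem theorem2p5 (n : nat) (eps : algC) (hn : (2 <= n)%N)
    (heps : n.-primitive_root eps) :
  [/\ \dim {: 'rV[algC]_n} = n,
      commutative_alg n eps,
      medial_alg n eps,
      isospectral_alg n eps
    & (forall p : Cn n, pp eps p n.+1 = beta eps p *: p) /\
      (forall p q : Cn n, beta eps (circ eps p q) = beta eps p * beta eps q)].
Proof.
split.
- by rewrite dimvf /dim /= mul1n.
- exact: circ_commutative heps.
- exact: circ_medial heps.
- exact: circ_isospectral heps.
- by split; [apply: pp_beta heps | apply: beta_circ heps].
Qed.
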